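(* Let $G$ and $H$ be two nontrivial connected graphs. Then $hn_{cc}(G\circ H)=2$.
   Context: All graphs are finite, simple and undirected. For a graph $G$ and $S\subseteq V(G)$, the cycle interval $\langle S\rangle$ consists of the vertices of $S$ together with every vertex $w\in V(G)\setminus S$ such that $G[S\cup\{w\}]$ contains a cycle through $w$. $S$ is cycle convex if $\langle S\rangle=S$. The cycle convex hull $\langle S\rangle_C$ is the smallest cycle convex set containing $S$. A hull set is a set $S$ with $\langle S\rangle_C=V(G)$, and $hn_{cc}(G)$ is the minimum cardinality of a hull set. The lexicographic product $G\circ H$ has vertex set $V(G)\times V(H)$, with $(g_1,h_1)\sim(g_2,h_2)$ iff $g_1\sim g_2$ in $G$, or ($g_1=g_2$ and $h_1\sim h_2$ in $H$). A graph is nontrivial if it has at least two vertices. *)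

From mathcomp Require Import all_boot.
Set Implicit Arguments. Unset Strict Implicit. Unset Printing Implicit Defensive.

(* A finite simple graph: vertex set a finType T, adjacency e : rel T that is
   symmetric and irreflexive (these are hypotheses of the theorem). *)

Definition connected_graph (T : finType) (e : rel T) : Prop :=
  forall x y : T, connect e x y.

Definition is_graph_cycle (T : finType) (e : rel T) (c : seq T) : bool :=
  [&& uniq c, 3 <= size c & path.cycle e c].

Definition cycle_through_in (T : finType) (e : rel T) (X : {set T}) (w : T) : Prop :=
  exists c : seq T, [/\ is_graph_cycle e c, w \in c & all (fun v => v \in X) c].

Definition in_cycle_interval (T : finType) (e : rel T) (S : {set T}) (w : T) : Prop :=
  w \in S \/ (w \notin S /\ cycle_through_in e (w |: S) w).

Definition cycle_convex (T : finType) (e : rel T) (S : {set T}) : Prop :=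
  forall w, in_cycle_interval e S w -> w \in S.

Definition in_cycle_hull (T : finType) (e : rel T) (S : {set T}) (x : T) : Prop :=
  forall C : {set T}, cycle_convex e C -> S \subset C -> x \in C.

Definition cc_hull_set (T : finType) (e : rel T) (S : {set T}) : Prop :=
  forall x : T, in_cycle_hull e S x.

Definition is_cc_hull_number (T : finType) (e : rel T) (n : nat) : Prop :=
  (exists S : {set T}, cc_hull_set e S /\ #|S| = n) /\
  (forall S : {set T}, cc_hull_set e S -> n <= #|S|).

Definition lex_prod (T1 T2 : finType) (e1 : rel T1) (e2 : rel T2) : rel (T1 * T2) :=
  fun u v => e1 u.1 v.1 || ((u.1 == v.1) && e2 u.2 v.2).

From mathcomp Require Import all_boot.

Set Implicit Arguments.
Unset Strict Implicit.

(* A set with at most one vertex is cycle convex, so a hull set of a graph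
   with at least two vertices has at least two elements.  Conversely, in
   G o H take an edge a b of H and any g of G: a cycle convex set C containing
   (g, a) and (g, b) contains every (g', h) with g' adjacent to g, since
   (g', h), (g, a), (g, b) is a triangle.  In particular it contains (g', a)
   and (g', b), so by connectivity of G it contains the whole product. *)

Section CycleConvexity.

Variables (T : finType) (e : rel T).

Lemma connected_graph_invariant (P : pred T) (x : T) :
  connected_graph e -> (forall u v, e u v -> P u -> P v) -> P x -> forall y, P y.
Proof.
move=> con step Px y; case/connectP: (con x y) => p.
elim: p x Px => [|z p IH] x Px /=; first by move=> _ ->.
by case/andP=> exz pz ly; apply: IH (step _ _ exz Px) pz ly.
Qed.

Lemma exists_neighbor : connected_graph e -> 1 < #|T| -> forall x, exists y, e x y.
Proof.
move=> con ntT x.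
have : 0 < #|predC1 x| by rewrite cardC1; case: #|T| ntT => [|[]].
case/card_gt0P=> y; rewrite !inE => yx.
case/connectP: (con x y) => [[|z p] /= xp ly]; first by rewrite ly eqxx in yx.
by exists z; case/andP: xp.
Qed.

Lemma card_le1_cycle_convex (S : {set T}) : #|S| <= 1 -> cycle_convex e S.
Proof.
move=> S_le1 w [//|[wS [c [/and3P[uc c_ge3 _] _ cS]]]].
have : size c <= #|w |: S|.
  rewrite cardE; apply: uniq_leq_size => // v vc.
  by rewrite mem_enum; apply: (allP cS).
rewrite cardsU1 wS /= add1n => /(leq_trans c_ge3).
by rewrite ltnS => /leq_trans/(_ S_le1).
Qed.

Lemma cycle_convex_triangle (C : {set T}) (w x y : T) :
  irreflexive e -> cycle_convex e C -> x \in C -> y \in C ->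
  e w x -> e x y -> e y w -> w \in C.
Proof.
move=> irr convC xC yC ewx exy eyw; apply: convC.
have [wC|wC] := boolP (w \in C); [by left | right; split => //].
have neq u v : e u v -> u != v by apply: contraTneq => ->; rewrite irr.
exists [:: w; x; y]; split; last by rewrite /= !inE eqxx xC yC !orbT.
  by rewrite /is_graph_cycle /= !inE negb_or (eq_sym w y) !neq ?ewx ?exy ?eyw.
by rewrite inE eqxx.
Qed.

Lemma hull_set_card_gt1 (S : {set T}) :
  1 < #|T| -> cc_hull_set e S -> 1 < #|S|.
Proof.
move=> ntT hullS; rewrite ltnNge; apply/negP => S_le1.
have : #|T| <= #|S|.
  rewrite -cardsT; apply: subset_leq_card; apply/subsetP => x _.
  exact: hullS x S (card_le1_cycle_convex S_le1) (subxx S).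
by move/(leq_trans ntT)/leq_trans/(_ S_le1).
Qed.

Lemma cc_hull_number_two (S : {set T}) :
  1 < #|T| -> cc_hull_set e S -> #|S| = 2 -> is_cc_hull_number e 2.
Proof.
move=> ntT hullS cardS; split; first by exists S.
by move=> S' /(hull_set_card_gt1 ntT).
Qed.

End CycleConvexity.

Section LexicographicProduct.

Variables (TG TH : finType) (eG : rel TG) (eH : rel TH).
Hypotheses (symG : symmetric eG) (irrG : irreflexive eG) (irrH : irreflexive eH).

Local Notation E := (lex_prod eG eH).

Lemma lex_prod_irr : irreflexive E.
Proof. by move=> u; rewrite /lex_prod irrG irrH andbF. Qed.

Lemma lex_prod_cycle_convex_spread (C : {set TG * TH}) (g g' : TG) (a b : TH) :
  cycle_convex E C -> eH a b -> eG g g' ->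
  (g, a) \in C -> (g, b) \in C -> forall h, (g', h) \in C.
Proof.
move=> convC ab gg' gaC gbC h.
apply: (cycle_convex_triangle lex_prod_irr convC gaC gbC).
- by rewrite /lex_prod /= symG gg'.
- by rewrite /lex_prod /= eqxx ab orbT.
- by rewrite /lex_prod /= gg'.
Qed.

Lemma lex_prod_hull_set (g0 : TG) (a b : TH) :
  connected_graph eG -> 1 < #|TG| -> eH a b ->
  cc_hull_set E [set (g0, a); (g0, b)].
Proof.
move=> conG ntG ab [g h] C convC /subsetP S_C.
have spread := lex_prod_cycle_convex_spread convC ab.
pose fibre x := ((x, a) \in C) && ((x, b) \in C).
have fibreC g' : fibre g'.
  apply: (connected_graph_invariant (P := fibre) (x := g0) conG).
    by move=> x y xy /andP[xaC xbC]; rewrite /fibre !(spread x y xy).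
  by rewrite /fibre !S_C // !inE eqxx ?orbT.
have [g' gg'] := exists_neighbor conG ntG g.
have /andP[g'aC g'bC] := fibreC g'.
by apply: (spread g' g) => //; rewrite symG.
Qed.

End LexicographicProduct.

Unset Implicit Arguments.

Theorem mainTheorem2 (TG TH : finType) (eG : rel TG) (eH : rel TH)
  (symG : symmetric eG) (irrG : irreflexive eG)
  (symH : symmetric eH) (irrH : irreflexive eH)
  (ntG : 1 < #|TG|) (ntH : 1 < #|TH|)
  (conG : connected_graph eG) (conH : connected_graph eH) :
  is_cc_hull_number (lex_prod eG eH) 2.
Proof.
have [g0 _] := card_gt0P (ltnW ntG).
have [a _] := card_gt0P (ltnW ntH).
have [b ab] := exists_neighbor conH ntH a.
apply: (cc_hull_number_two _ (lex_prod_hull_set symG irrG irrH (g0 := g0) conG ntG ab)).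
  by rewrite card_prod (leq_trans ntG) // leq_pmulr // ltnW.
rewrite cards2; case: eqP => // [[a_eq_b]].
by rewrite a_eq_b irrH in ab.
Qed.
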